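(* Let $G$ be an abelian Polish group, let $P\subseteq G$ be a perfect set and let $C\subseteq G$ be a comeager set. Then there exists $g\in G$ such that $|C\cap (g+P)|=\mathfrak{c}$.
   Context: $\mathfrak c$ denotes the cardinality of the continuum. *)

From Stdlib Require Import Reals.
From Stdlib Require Import ssreflect ssrfun.
Open Scope R_scope.

Record abgroup : Type := AbGroup {
  carrier :> Type;
  gzero : carrier;
  gadd : carrier -> carrier -> carrier;
  gopp : carrier -> carrier;
  gaddA : forall x y z, gadd x (gadd y z) = gadd (gadd x y) z;
  gaddC : forall x y, gadd x y = gadd y x;
  gadd0 : forall x, gadd gzero x = x;
  gaddN : forall x, gadd (gopp x) x = gzero
}.

Section MetricDefs.
Context {X : Type}.
Variable d : X -> X -> R.

Definition is_metric : Prop :=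
  (forall x y, 0 <= d x y) /\
  (forall x y, d x y = 0 <-> x = y) /\
  (forall x y, d x y = d y x) /\
  (forall x y z, d x z <= d x y + d y z).

Definition cauchy (u : nat -> X) : Prop :=
  forall eps, 0 < eps -> exists N, forall m n, (N <= m)%nat -> (N <= n)%nat ->
    d (u m) (u n) < eps.

Definition converges_to (u : nat -> X) (l : X) : Prop :=
  forall eps, 0 < eps -> exists N, forall n, (N <= n)%nat -> d (u n) l < eps.

Definition complete_metric : Prop :=
  forall u, cauchy u -> exists l, converges_to u l.

Definition dense (D : X -> Prop) : Prop :=
  forall x eps, 0 < eps -> exists y, D y /\ d x y < eps.

Definition separable_metric : Prop :=
  exists s : nat -> X, dense (fun y => exists n, y = s n).

Definition is_open (U : X -> Prop) : Prop :=
  forall x, U x -> exists eps, 0 < eps /\ forall y, d x y < eps -> U y.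

Definition is_closed (F : X -> Prop) : Prop := is_open (fun x => ~ F x).

Definition isolated_in (A : X -> Prop) (x : X) : Prop :=
  A x /\ exists eps, 0 < eps /\ forall y, A y -> d x y < eps -> y = x.

Definition perfect (P : X -> Prop) : Prop :=
  (exists x, P x) /\ is_closed P /\ forall x, ~ isolated_in P x.

Definition comeager (C : X -> Prop) : Prop :=
  exists U : nat -> X -> Prop,
    (forall n, is_open (U n) /\ dense (U n)) /\
    (forall x, (forall n, U n x) -> C x).
End MetricDefs.

Definition polish_group_metric (G : abgroup) (d : G -> G -> R) : Prop :=
  is_metric d /\ complete_metric d /\ separable_metric d /\
  (forall x y eps, 0 < eps -> exists delta, 0 < delta /\
     forall x' y', d x x' < delta -> d y y' < delta ->
       d (gadd G x y) (gadd G x' y') < eps) /\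
  (forall x eps, 0 < eps -> exists delta, 0 < delta /\
     forall x', d x x' < delta -> d (gopp G x) (gopp G x') < eps).

Definition translate (G : abgroup) (g : G) (P : G -> Prop) : G -> Prop :=
  fun x => exists p, P p /\ x = gadd G g p.

Definition has_card_continuum {X : Type} (S : X -> Prop) : Prop :=
  exists f : (nat -> bool) -> {x : X | S x}, bijective f.

(** A Cantor scheme inside [P] is built together with a Cauchy sequence of
    translations [g_n].  The nodes of the binary tree are enumerated
    breadth-first and each node gets its own stage: when a node of depth [k]
    with centre [q] is created, the current translation ball is shrunk so that
    (translation ball) + (node ball) lies in the dense open set [U_k]; this is
    possible because [g + q] can be pushed into [U_k] by a small move of [g].
    In the limit, [g + F x] lies in every [U_k] for each branch [x], and the
    branch limits [F x] are pairwise distinct points of [P].  So [C ∩ (g + P)]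
    contains an injective image of [2^ℕ], while separability injects all of
    [G] into [2^ℕ]; Schröder–Bernstein concludes. *)
From Stdlib Require Import Reals Lra Lia Classical ClassicalEpsilon
  FunctionalExtensionality ProofIrrelevance Cantor.
From Stdlib Require Import ssrfun.
Open Scope R_scope.

Section SchroederBernstein.
Context {A B : Type} (f : A -> B) (h : B -> A).
Hypotheses (f_inj : injective f) (h_inj : injective h).

(* The points of [A] lying on an [h \o f]-orbit that starts outside the range
   of [h]; the bijection is [f] on them and [h^-1] elsewhere. *)
Definition sb_orbit (a : A) : Prop :=
  exists n a0, (forall b, h b <> a0) /\ a = Nat.iter n (fun z => h (f z)) a0.

Definition h_inv (a : A) : B := epsilon (inhabits (f a)) (fun b => h b = a).

Definition sb_map (a : A) : B :=
  if excluded_middle_informative (sb_orbit a) then f a else h_inv a.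

Lemma h_invK a : ~ sb_orbit a -> h (h_inv a) = a.
Proof.
  intro Ha. apply (epsilon_spec (inhabits (f a)) (fun b => h b = a)).
  apply NNPP. intro Hn. apply Ha. exists 0%nat, a. split; [|reflexivity].
  intros b E. apply Hn. exists b. exact E.
Qed.

Lemma sb_orbit_step a : sb_orbit a -> sb_orbit (h (f a)).
Proof.
  intros [n [a0 [Ha0 ->]]]. exists (S n), a0. split; [exact Ha0 | reflexivity].
Qed.

Lemma sb_map_injective : injective sb_map.
Proof.
  intros x y. unfold sb_map.
  destruct (excluded_middle_informative (sb_orbit x)) as [Ox|Ox];
  destruct (excluded_middle_informative (sb_orbit y)) as [Oy|Oy]; intro E.
  - exact (f_inj _ _ E).
  - exfalso. apply Oy. rewrite <- (h_invK _ Oy), <- E. exact (sb_orbit_step _ Ox).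
  - exfalso. apply Ox. rewrite <- (h_invK _ Ox), E. exact (sb_orbit_step _ Oy).
  - rewrite <- (h_invK _ Ox), <- (h_invK _ Oy), E. reflexivity.
Qed.

Lemma sb_map_surjective b : exists a, sb_map a = b.
Proof.
  destruct (classic (sb_orbit (h b))) as [[n [a0 [Ha0 E]]]|Ob].
  - destruct n as [|n]; [exfalso; exact (Ha0 b E)|].
    exists (Nat.iter n (fun z => h (f z)) a0).
    assert (Eb : f (Nat.iter n (fun z => h (f z)) a0) = b) by (symmetry; exact (h_inj _ _ E)).
    unfold sb_map. destruct (excluded_middle_informative _) as [O|O]; [exact Eb|].
    exfalso. apply O. exists n, a0. split; [exact Ha0 | reflexivity].
  - exists (h b). unfold sb_map.
    destruct (excluded_middle_informative _) as [O|O]; [contradiction|].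
    apply (h_inj _ _ (h_invK _ O)).
Qed.

Lemma schroeder_bernstein : exists F : A -> B, bijective F.
Proof.
  destruct (choice (fun b a => sb_map a = b) sb_map_surjective) as [g Hg].
  exists sb_map. apply (Bijective (g := g)).
  - intro a. apply sb_map_injective, Hg.
  - exact Hg.
Qed.

End SchroederBernstein.

Section Metric.
Context {X : Type} (d : X -> X -> R).
Hypothesis d_metric : is_metric d.

Lemma dist_ge0 x y : 0 <= d x y.
Proof. apply d_metric. Qed.

Lemma dist_eq0 x y : d x y = 0 <-> x = y.
Proof. apply d_metric. Qed.

Lemma dist_refl x : d x x = 0.
Proof. apply dist_eq0. reflexivity. Qed.

Lemma dist_sym x y : d x y = d y x.
Proof. apply d_metric. Qed.

Lemma dist_triangle x y z : d x z <= d x y + d y z.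
Proof. apply d_metric. Qed.

Definition shrinks (c : X) (r : R) (c' : X) (r' : R) : Prop :=
  d c c' + r' <= r /\ r' <= r / 2.

Lemma converges_dist_le u l a r N :
  converges_to d u l -> (forall n, (N <= n)%nat -> d a (u n) <= r) -> d a l <= r.
Proof.
  intros Hl Hb. apply Rnot_lt_le. intro Hlt.
  destruct (Hl (d a l - r)) as [M HM]; [lra|].
  specialize (HM (Nat.max N M) (Nat.le_max_r _ _)).
  specialize (Hb (Nat.max N M) (Nat.le_max_l _ _)).
  pose proof (dist_triangle a (u (Nat.max N M)) l). lra.
Qed.

Lemma closed_limit (F : X -> Prop) u l :
  is_closed d F -> (forall n, F (u n)) -> converges_to d u l -> F l.
Proof.
  intros HF Hu Hl. apply NNPP. intro Fl.
  destruct (HF l Fl) as [e [He Hball]].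
  destruct (Hl e He) as [N HN]. apply (Hball (u N)); [|exact (Hu N)].
  rewrite dist_sym. apply HN. lia.
Qed.

Lemma half_pow_small a eps :
  0 <= a -> 0 < eps -> exists N, forall n, (N <= n)%nat -> a * (1 / 2) ^ n < eps.
Proof.
  intros Ha Heps.
  destruct (pow_lt_1_zero (1 / 2)) with (y := eps / (a + 1)) as [N HN].
  - rewrite Rabs_right; lra.
  - apply Rdiv_lt_0_compat; lra.
  - exists N. intros n Hn. specialize (HN n Hn).
    rewrite Rabs_right in HN by (apply Rle_ge, pow_le; lra).
    assert (Hpow : 0 <= (1 / 2) ^ n) by (apply pow_le; lra).
    apply Rle_lt_trans with ((a + 1) * (1 / 2) ^ n); [nra|].
    apply (Rmult_lt_compat_l (a + 1)) in HN; [|lra].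
    replace ((a + 1) * (eps / (a + 1))) with eps in HN by (field; lra). exact HN.
Qed.

Lemma shrinking_balls_limit (u : nat -> X) (rho : nat -> R) :
  complete_metric d -> (forall k, 0 <= rho k) ->
  (forall k, shrinks (u k) (rho k) (u (S k)) (rho (S k))) ->
  exists l, converges_to d u l /\ forall k, d (u k) l <= rho k.
Proof.
  intros Hc Hpos Hshr.
  assert (Htele : forall n k, d (u k) (u (n + k)%nat) + rho (n + k)%nat <= rho k).
  { induction n as [|n IH]; intro k.
    - rewrite dist_refl. simpl. lra.
    - replace (S n + k)%nat with (n + S k)%nat by lia.
      specialize (IH (S k)). destruct (Hshr k) as [H1 _].
      pose proof (dist_triangle (u k) (u (S k)) (u (n + S k)%nat)). lra. }
  assert (Hfar : forall k n, (k <= n)%nat -> d (u k) (u n) <= rho k).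
  { intros k n Hkn. specialize (Htele (n - k)%nat k).
    replace (n - k + k)%nat with n in Htele by lia. pose proof (Hpos n). lra. }
  assert (Hgeom : forall k, rho k <= rho 0%nat * (1 / 2) ^ k).
  { induction k as [|k IH]; simpl; [lra|]. destruct (Hshr k) as [_ H2]. lra. }
  assert (Hcauchy : cauchy d u).
  { intros eps Heps.
    destruct (half_pow_small (rho 0%nat) (eps / 2)) as [N HN]; [apply Hpos | lra |].
    exists N. intros m n Hm Hn.
    pose proof (HN N (le_n N)). pose proof (Hgeom N).
    pose proof (Hfar N m Hm). pose proof (Hfar N n Hn).
    pose proof (dist_triangle (u m) (u N) (u n)). rewrite (dist_sym (u m) (u N)) in *. lra. }
  destruct (Hc u Hcauchy) as [l Hl]. exists l. split; [exact Hl|].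
  intro k. apply (converges_dist_le u l (u k) (rho k) k Hl), Hfar.
Qed.

Lemma not_isolated_near (P : X -> Prop) p r :
  (forall x, ~ isolated_in d P x) -> P p -> 0 < r ->
  exists a, P a /\ 0 < d p a < r.
Proof.
  intros Hni Hp Hr. apply NNPP. intro Hn. apply (Hni p). split; [exact Hp|].
  exists r. split; [exact Hr|]. intros y Hy Hdy. apply NNPP. intro Hne. apply Hn.
  exists y. repeat split; [exact Hy | | exact Hdy].
  destruct (dist_ge0 p y) as [Hlt|Heq]; [exact Hlt|].
  exfalso. apply Hne. symmetry. apply dist_eq0. symmetry. exact Heq.
Qed.

(* Bit [(i, j)] of the code of [x] records whether [x] is within [1/j] of the
   [i]-th point of the dense sequence. *)
Lemma separable_inject_cantor :
  separable_metric d -> exists enc : X -> (nat -> bool), injective enc.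
Proof.
  intros [s Hs].
  exists (fun x k => let p := Cantor.of_nat k in
            if Rlt_dec (d x (s (fst p))) (/ INR (snd p)) then true else false).
  intros x y E. apply NNPP. intro Hxy.
  assert (Hr : 0 < d x y).
  { destruct (dist_ge0 x y) as [Hlt|Heq]; [exact Hlt|].
    exfalso. apply Hxy, dist_eq0. symmetry. exact Heq. }
  destruct (archimed_cor1 (d x y / 2)) as [j [Hj Hj0]]; [lra|].
  assert (Hjpos : 0 < / INR j) by (apply Rinv_0_lt_compat, lt_0_INR; exact Hj0).
  destruct (Hs x (/ INR j) Hjpos) as [z [[i ->] Hxi]].
  assert (Ebit := f_equal (fun e => e (Cantor.to_nat (i, j))) E). cbv beta in Ebit.
  rewrite Cantor.cancel_of_to in Ebit. simpl in Ebit.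
  assert (Hyi : ~ d y (s i) < / INR j).
  { pose proof (dist_triangle x (s i) y). rewrite (dist_sym (s i)) in *. lra. }
  destruct (Rlt_dec (d x (s i)) _), (Rlt_dec (d y (s i)) _);
    try discriminate; contradiction.
Qed.

End Metric.

Section CourseOfValues.
Context {A : Type} (a0 : A) (next : nat -> (nat -> A) -> A).

(* [cov_table n] stores the values at [0 .. n]; the value at [S n] is computed
   by [next n] from them. *)
Fixpoint cov_table (n : nat) : nat -> A :=
  match n with
  | O => fun _ => a0
  | S n => fun i => if Nat.leb i n then cov_table n i else next n (cov_table n)
  end.

Definition course_of_values (n : nat) : A := cov_table n n.

Lemma cov_table_top n : cov_table (S n) (S n) = next n (cov_table n).
Proof.
  cbn [cov_table]. rewrite (proj2 (Nat.leb_gt (S n) n) (Nat.lt_succ_diag_r n)). reflexivity.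
Qed.

Lemma cov_table_le n i : (i <= n)%nat -> cov_table n i = course_of_values i.
Proof.
  induction n as [|n IH]; intro Hi.
  - replace i with 0%nat by lia. reflexivity.
  - cbn [cov_table]. destruct (Nat.leb i n) eqn:E.
    + apply Nat.leb_le in E. exact (IH E).
    + apply Nat.leb_gt in E. replace i with (S n) by lia.
      unfold course_of_values. rewrite cov_table_top. reflexivity.
Qed.

Lemma course_of_values_S n :
  (forall h h', (forall i, (i <= n)%nat -> h i = h' i) -> next n h = next n h') ->
  course_of_values (S n) = next n course_of_values.
Proof.
  intro Hnext. unfold course_of_values at 1. rewrite cov_table_top.
  apply Hnext, cov_table_le.
Qed.

End CourseOfValues.

Section GroupMetric.
Variables (G : abgroup) (d : G -> G -> R).
Hypothesis d_metric : is_metric d.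

Lemma gaddK x y : gadd G (gadd G x y) (gopp G y) = x.
Proof. rewrite <- gaddA, (gaddC G y), gaddN, gaddC. apply gadd0. Qed.

Lemma gaddNK x y : gadd G (gadd G x (gopp G y)) y = x.
Proof. rewrite <- gaddA, gaddN, gaddC. apply gadd0. Qed.

Lemma gadd_injective g : injective (gadd G g).
Proof.
  intros x y E. rewrite <- (gadd0 G x), <- (gadd0 G y), <- (gaddN G g), <- !gaddA, E.
  reflexivity.
Qed.

Definition continuous_add : Prop :=
  forall x y eps, 0 < eps -> exists delta, 0 < delta /\
    forall x' y', d x x' < delta -> d y y' < delta -> d (gadd G x y) (gadd G x' y') < eps.

Definition balls_sum_in (V : G -> Prop) (g : G) (delta : R) (q : G) (r : R) : Prop :=
  forall g' q', d g g' <= delta -> d q q' <= r -> V (gadd G g' q').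

(* Pick [h ∈ V] near [g0 + q] and move [g0] to [h - q]: then [g1 + q = h] is
   an interior point of [V], and continuity of addition at [(g1, q)] gives the
   two radii. *)
Lemma translate_into_open_dense (V : G -> Prop) q g0 delta0 :
  continuous_add -> is_open d V -> dense d V -> 0 < delta0 ->
  exists g1 delta1 r1, 0 < delta1 /\ 0 < r1 /\
    shrinks d g0 delta0 g1 delta1 /\ balls_sum_in V g1 delta1 q r1.
Proof.
  intros Hadd HO HD Hdelta.
  destruct (Hadd (gadd G g0 q) (gopp G q) (delta0 / 2)) as [eta [Heta Hnear]]; [lra|].
  destruct (HD (gadd G g0 q) eta Heta) as [h [Vh Hh]].
  destruct (HO h Vh) as [e [He Hball]].
  set (g1 := gadd G h (gopp G q)).
  assert (Hg1 : d g0 g1 < delta0 / 2).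
  { rewrite <- (gaddK g0 q) at 1. apply Hnear; [exact Hh|].
    rewrite (dist_refl d d_metric). exact Heta. }
  destruct (Hadd g1 q e He) as [de [Hde Hsum]].
  exists g1, (Rmin (de / 2) (delta0 / 2)), (de / 2).
  pose proof (Rmin_l (de / 2) (delta0 / 2)). pose proof (Rmin_r (de / 2) (delta0 / 2)).
  split; [apply Rmin_glb_lt; lra|]. split; [lra|]. split; [unfold shrinks; lra|].
  intros g' q' Hg' Hq'. apply Hball.
  replace h with (gadd G g1 q) by apply gaddNK. apply Hsum; lra.
Qed.

End GroupMetric.

Section CantorScheme.
Variables (G : abgroup) (d : G -> G -> R).
Hypotheses (d_metric : is_metric d) (d_complete : complete_metric d)
  (add_cont : continuous_add G d).
Variables (P : G -> Prop) (p0 : G) (U : nat -> G -> Prop).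
Hypotheses (P_closed : is_closed d P) (P_not_isolated : forall x, ~ isolated_in d P x)
  (P_p0 : P p0) (U_open_dense : forall n, is_open d (U n) /\ dense d (U n)).

Definition split_point (p : G) (r : R) : G :=
  epsilon (inhabits p) (fun a => P a /\ 0 < d p a < r).

Lemma split_pointP p r : P p -> 0 < r -> P (split_point p r) /\ 0 < d p (split_point p r) < r.
Proof.
  intros Hp Hr. apply (epsilon_spec (inhabits p) (fun a => P a /\ 0 < d p a < r)).
  exact (not_isolated_near d d_metric P p r P_not_isolated Hp Hr).
Qed.

Record refinement := Refinement { ref_shift : G; ref_slack : R; ref_radius : R }.

Definition good_refinement (n : nat) (q g : G) (delta : R) (t : refinement) : Prop :=
  0 < ref_slack t /\ 0 < ref_radius t /\ shrinks d g delta (ref_shift t) (ref_slack t) /\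
  balls_sum_in G d (U n) (ref_shift t) (ref_slack t) q (ref_radius t).

Definition refine (n : nat) (q g : G) (delta : R) : refinement :=
  epsilon (inhabits (Refinement g delta delta)) (good_refinement n q g delta).

Lemma refineP n q g delta : 0 < delta -> good_refinement n q g delta (refine n q g delta).
Proof.
  intro Hdelta. unfold refine. apply epsilon_spec.
  destruct (U_open_dense n) as [HO HD].
  destruct (translate_into_open_dense G d d_metric (U n) q g delta add_cont HO HD Hdelta)
    as [g1 [delta1 [r1 H]]].
  exists (Refinement g1 delta1 r1). exact H.
Qed.

(* A stage records the node of the tree created at that stage (its depth,
   centre and radius) and the translation ball current after that stage. *)
Record stage := Stage { level : nat; center : G; radius : R; shift : G; slack : R }.

Definition valid (s : stage) : Prop := P (center s) /\ 0 < radius s /\ 0 < slack s.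

(* The split point is within a quarter of the parent radius, so both children
   stay inside the parent ball; radii below [d c a / 3] keep them disjoint. *)
Definition child (par prev : stage) (b : bool) : stage :=
  let c := center par in
  let a := split_point c (radius par / 4) in
  let q := if b then a else c in
  let t := refine (level par) q (shift prev) (slack prev) in
  Stage (S (level par)) q (Rmin (ref_radius t) (d c a / 3)) (ref_shift t) (ref_slack t).

Lemma child_spec par prev b : valid par -> valid prev ->
  let s := child par prev b in
  valid s /\ level s = S (level par) /\
  shrinks d (center par) (radius par) (center s) (radius s) /\
  shrinks d (shift prev) (slack prev) (shift s) (slack s) /\
  balls_sum_in G d (U (level par)) (shift s) (slack s) (center s) (radius s).
Proof.
  intros [Pc [Hr _]] [_ [_ Hdelta]]. unfold child. cbv zeta.
  set (c := center par). set (a := split_point c (radius par / 4)).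
  destruct (split_pointP c (radius par / 4) Pc) as [Pa [Ha1 Ha2]]; [lra|]. fold a in Pa, Ha1, Ha2.
  set (t := refine _ _ _ _).
  destruct (refineP (level par) (if b then a else c) (shift prev) (slack prev) Hdelta)
    as [Ht1 [Ht2 [[Ht3 Ht3'] Ht4]]]. fold t in Ht1, Ht2, Ht3, Ht3', Ht4.
  pose proof (Rmin_l (ref_radius t) (d c a / 3)). pose proof (Rmin_r (ref_radius t) (d c a / 3)).
  cbn [level center radius shift slack]. unfold valid, shrinks.
  cbn [level center radius shift slack].
  repeat split; try lra.
  - destruct b; assumption.
  - apply Rmin_glb_lt; lra.
  - destruct b; cbv iota; [|rewrite (dist_refl d d_metric)]; lra.
  - intros g' q' Hg Hq. apply Ht4; lra.
Qed.

Lemma children_separated par prev prev' z : valid par ->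
  d (center (child par prev false)) z <= radius (child par prev false) ->
  d (center (child par prev' true)) z <= radius (child par prev' true) -> False.
Proof.
  intros [Pc [Hr _]]. unfold child. cbn [center radius].
  set (c := center par). set (a := split_point c (radius par / 4)).
  destruct (split_pointP c (radius par / 4) Pc) as [_ [Ha _]]; [lra|]. fold a in Ha.
  intros Hc Ha'.
  pose proof (Rmin_r (ref_radius (refine (level par) c (shift prev) (slack prev))) (d c a / 3)).
  pose proof (Rmin_r (ref_radius (refine (level par) a (shift prev') (slack prev'))) (d c a / 3)).
  pose proof (dist_triangle d d_metric c z a). rewrite (dist_sym d d_metric z a) in *. lra.
Qed.

(* Breadth-first numbering of the binary tree: the root is stage [0], and the
   [b]-child of the node of stage [n] is created at stage [S (tree_code n b)]. *)
Definition tree_code (n : nat) (b : bool) : nat := (2 * n + Nat.b2n b)%nat.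

Lemma tree_code_div2_odd n b : Nat.div2 (tree_code n b) = n /\ Nat.odd (tree_code n b) = b.
Proof.
  unfold tree_code. destruct b; cbn [Nat.b2n].
  - rewrite Nat.odd_odd, Nat.add_1_r, Nat.div2_succ_double. split; reflexivity.
  - rewrite Nat.add_0_r, Nat.odd_even, Nat.div2_double. split; reflexivity.
Qed.

Definition root : stage := Stage 0 p0 1 (gzero G) 1.

Definition stages : nat -> stage :=
  course_of_values root (fun n h => child (h (Nat.div2 n)) (h n) (Nat.odd n)).

Lemma stages_S n : stages (S n) = child (stages (Nat.div2 n)) (stages n) (Nat.odd n).
Proof.
  unfold stages. rewrite course_of_values_S; [reflexivity|]. intros h h' Hh.
  rewrite (Hh (Nat.div2 n)), (Hh n); [reflexivity | lia | apply Nat.le_div2_diag_l].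
Qed.

Lemma stages_child n b : stages (S (tree_code n b)) = child (stages n) (stages (tree_code n b)) b.
Proof.
  destruct (tree_code_div2_odd n b) as [E1 E2]. rewrite stages_S, E1, E2. reflexivity.
Qed.

Lemma stages_valid n : valid (stages n).
Proof.
  induction n as [n IH] using (well_founded_induction Wf_nat.lt_wf).
  destruct n as [|n].
  - unfold valid. simpl. repeat split; [exact P_p0 | lra | lra].
  - rewrite stages_S. apply child_spec; apply IH; [|lia].
    pose proof (Nat.le_div2_diag_l n). lia.
Qed.

Lemma stages_child_spec n b :
  let s := stages (S (tree_code n b)) in
  level s = S (level (stages n)) /\
  shrinks d (center (stages n)) (radius (stages n)) (center s) (radius s) /\
  balls_sum_in G d (U (level (stages n))) (shift s) (slack s) (center s) (radius s).
Proof.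
  cbv zeta. rewrite stages_child.
  destruct (child_spec (stages n) (stages (tree_code n b)) b) as [_ [H1 [H2 [_ H3]]]];
    try apply stages_valid.
  exact (conj H1 (conj H2 H3)).
Qed.

Lemma shift_limit : exists g, forall n, d (shift (stages n)) g <= slack (stages n).
Proof.
  destruct (shrinking_balls_limit d d_metric
             (fun n => shift (stages n)) (fun n => slack (stages n))) as [g [_ Hg]].
  - exact d_complete.
  - intro n. apply Rlt_le, stages_valid.
  - intro n. rewrite stages_S. apply child_spec; apply stages_valid.
  - exists g. exact Hg.
Qed.

Fixpoint branch (x : nat -> bool) (k : nat) : nat :=
  match k with O => O | S k => S (tree_code (branch x k) (x k)) end.

Lemma level_branch x k : level (stages (branch x k)) = k.
Proof.
  induction k as [|k IH]; [reflexivity|].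
  cbn [branch]. destruct (stages_child_spec (branch x k) (x k)) as [E _].
  rewrite E, IH. reflexivity.
Qed.

Definition branch_limit (x : nat -> bool) (l : G) : Prop :=
  converges_to d (fun k => center (stages (branch x k))) l /\
  forall k, d (center (stages (branch x k))) l <= radius (stages (branch x k)).

Lemma branch_limit_exists x : exists l, branch_limit x l.
Proof.
  apply (shrinking_balls_limit d d_metric).
  - exact d_complete.
  - intro k. apply Rlt_le, stages_valid.
  - intro k. apply (stages_child_spec (branch x k) (x k)).
Qed.

Lemma branch_limit_injective (F : (nat -> bool) -> G) :
  (forall x, branch_limit x (F x)) -> injective F.
Proof.
  intros HF x y Exy.
  assert (Hstep : forall k, branch x k = branch y k -> x k = y k).
  { intros k Ek. destruct (Bool.bool_dec (x k) (y k)) as [E|Ne]; [exact E|]. exfalso.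
    destruct (HF x) as [_ Hx]. destruct (HF y) as [_ Hy].
    specialize (Hx (S k)). specialize (Hy (S k)). rewrite <- Exy in Hy.
    cbn [branch] in Hx, Hy. rewrite <- Ek in Hy. rewrite !stages_child in Hx, Hy.
    destruct (x k), (y k); try congruence.
    - exact (children_separated _ _ _ _ (stages_valid _) Hy Hx).
    - exact (children_separated _ _ _ _ (stages_valid _) Hx Hy). }
  assert (Hbranch : forall k, branch x k = branch y k).
  { induction k as [|k IH]; [reflexivity|]. cbn [branch]. rewrite IH, (Hstep k IH). reflexivity. }
  apply functional_extensionality. intro k. exact (Hstep k (Hbranch k)).
Qed.

Lemma cantor_scheme : exists g (F : (nat -> bool) -> G),
  injective F /\ forall x, P (F x) /\ forall k, U k (gadd G g (F x)).
Proof.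
  destruct shift_limit as [g Hg].
  destruct (choice branch_limit branch_limit_exists) as [F HF].
  exists g, F. split; [exact (branch_limit_injective F HF)|].
  intro x. destruct (HF x) as [Hconv Hball]. split.
  - apply (closed_limit d d_metric P (fun k => center (stages (branch x k))) _ P_closed);
      [intro k; apply stages_valid | exact Hconv].
  - intro k. destruct (stages_child_spec (branch x k) (x k)) as [_ [_ Hsum]].
    rewrite level_branch in Hsum. apply Hsum; [apply Hg | exact (Hball (S k))].
Qed.

End CantorScheme.

Theorem lemma3p4 (G : abgroup) (d : G -> G -> R)
  (HG : polish_group_metric G d) (P C : G -> Prop)
  (HP : perfect d P) (HC : comeager d C) :
  exists g : G, has_card_continuum (fun x => C x /\ translate G g P x).
Proof.
  destruct HG as [Hd [Hc [Hsep [Hadd _]]]].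
  destruct HP as [[p0 Hp0] [Hcl Hni]].
  destruct HC as [U [HU HUC]].
  destruct (cantor_scheme G d Hd Hc Hadd P p0 U Hcl Hni Hp0 HU) as [g [F [Finj HF]]].
  exists g.
  set (S := fun z => C z /\ translate G g P z).
  assert (HS : forall x, S (gadd G g (F x))).
  { intro x. destruct (HF x) as [HPx HUx]. split; [exact (HUC _ HUx) | exists (F x); split; auto]. }
  destruct (separable_inject_cantor d Hd Hsep) as [enc Henc].
  apply (schroeder_bernstein (fun x => exist S (gadd G g (F x)) (HS x))
                             (fun z => enc (proj1_sig z))).
  - intros x y E. apply Finj, (gadd_injective G g). exact (f_equal (@proj1_sig _ _) E).
  - intros [z1 S1] [z2 S2] E. apply Henc in E. cbn in E. subst z2.
    apply subset_eq_compat. reflexivity.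
Qed.
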